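(* Let $(G_N)$ be a family of nonempty graphs. If $\sup_N |V(\operatorname{core}(G_N))|<\infty$, then the set $\{\hat r_\infty(G_N): N\ge 1\}$ is finite.
   Context: All graphs are finite and simple; a graph is nonempty if it has at least one edge. $\operatorname{core}(G)$ is the graph obtained from $G$ by deleting all isolated vertices. $tK_2$ is a matching with $t$ edges. For graphs $F,G,H$, $F\to(G,H)$ means every red--blue coloring of $E(F)$ contains a red copy of $G$ or a blue copy of $H$, and $\hat r(G,H)=\min\{|E(F)|:F\to(G,H)\}$. For a nonempty graph $G$, $\hat r_\infty(G)=\lim_{t\to\infty}\frac{\hat r(tK_2,G)}{t\,|E(G)|}$ (this limit exists). *)

From Stdlib Require Import Reals ClassicalEpsilon.
From Coquelicot Require Import Coquelicot.
From mathcomp Require Import all_boot.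

Set Implicit Arguments.
Unset Strict Implicit.
Unset Printing Implicit Defensive.

Record graph := Graph {
  gn : nat;
  gadj : rel 'I_gn;
  gsym : symmetric gadj;
  girr : irreflexive gadj }.
Arguments gadj : clear implicits.

Definition edges (G : graph) : {set {set 'I_(gn G)}} :=
  [set e : {set 'I_(gn G)} | [exists u : 'I_(gn G), exists v : 'I_(gn G), gadj G u v && (e == [set u; v])]].

Definition nedges (G : graph) : nat := #|edges G|.

Definition nonempty_graph (G : graph) : Prop := (0 < nedges G)%N.

Definition core_order (G : graph) : nat :=
  #|[set v : 'I_(gn G) | [exists u : 'I_(gn G), gadj G v u]]|.

(* A red/blue colouring of E(F): value of an edge {u,v} is c [set u; v]
   (true = red, false = blue); values on non-edges are irrelevant. *)
Definition coloring (F : graph) := {set 'I_(gn F)} -> bool.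

Definition mono_copy (F : graph) (c : coloring F) (col : bool) (G : graph) : Prop :=
  exists f : 'I_(gn G) -> 'I_(gn F), injective f /\
    forall u v, gadj G u v -> gadj F (f u) (f v) /\ c [set f u; f v] = col.

Definition arrows (F G H : graph) : Prop :=
  forall c : coloring F, mono_copy c true G \/ mono_copy c false H.

Definition size_ramsey_ok (G H : graph) (m : nat) : Prop :=
  exists F : graph, nedges F = m /\ arrows F G H.

(* hat r(G,H) = min { |E(F)| : F -> (G,H) }  (the minimum exists by Ramsey's
   theorem; epsilon is only used to pick it). *)
Definition size_ramsey (G H : graph) : nat :=
  epsilon (inhabits 0%nat)
    (fun m => size_ramsey_ok G H m /\ forall k, size_ramsey_ok G H k -> (m <= k)%N).

(* The matching tK_2 on 'I_(2t): i ~ j iff i <> j and i/2 = j/2. *)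
Definition matching_adj (t : nat) : rel 'I_(t.*2) :=
  fun i j => (i != j) && (i./2 == j./2).

Arguments matching_adj : clear implicits.
Lemma matching_sym t : symmetric (matching_adj t).
Proof. by move=> i j; rewrite /matching_adj eq_sym [j./2 == _]eq_sym. Qed.

Lemma matching_irr t : irreflexive (matching_adj t).
Proof. by move=> i; rewrite /matching_adj eqxx. Qed.

Definition matching (t : nat) : graph :=
  @Graph t.*2 (matching_adj t) (@matching_sym t) (@matching_irr t).

Definition r_infty (G : graph) : R :=
  real (Lim_seq (fun t : nat =>
     (INR (size_ramsey (matching t.+1) G) / (INR t.+1 * INR (nedges G)))%R)).

(* The value of r_infty G depends only on the core of G: padding a host graph
   with isolated vertices changes neither its size nor its arrowing properties,
   so if the cores of G and G' embed into each other, every host arrowing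
   (K, G) yields one of the same size arrowing (K, G'), and conversely; hence
   size_ramsey K G = size_ramsey K G' and |E(G)| = |E(G')|.  A graph whose core
   has at most B vertices has the same core, up to mutual embedding, as a graph
   on the vertex set {0, ..., B} given by a boolean table on pairs, and there
   are only finitely many such tables. *)
From Stdlib Require Import Reals ClassicalEpsilon FunctionalExtensionality PropExtensionality.
From Coquelicot Require Import Coquelicot.
From mathcomp Require Import all_boot.

Set Implicit Arguments.
Unset Strict Implicit.
Unset Printing Implicit Defensive.

Lemma imset_inj_in (aT rT : finType) (f : aT -> rT) (D : {set aT}) :
  {in D &, injective f} ->
  {in [pred A : {set aT} | A \subset D] &, injective (fun A : {set aT} => f @: A)}.
Proof.
move=> injf A B /subsetP sAD /subsetP sBD /= eqAB.
have memE X x : {subset X <= D} -> x \in D -> (x \in X) = (f x \in f @: X).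
  move=> sXD xD; apply/idP/imsetP => [xX | [y yX /injf -> //]]; first by exists x.
  exact: sXD.
apply/setP => x; have [xD | xD] := boolP (x \in D).
  by rewrite memE // eqAB -memE.
by rewrite (contraNF (sAD x)) ?(contraNF (sBD x)).
Qed.

Lemma mem_In (T : eqType) (x : T) (s : seq T) : x \in s -> List.In x s.
Proof. by elim: s => //= y s IHs; rewrite inE => /orP [/eqP ->|/IHs]; [left|right]. Qed.

Lemma edgesP (G : graph) (A : {set 'I_(gn G)}) :
  reflect (exists u v, gadj G u v /\ A = [set u; v]) (A \in edges G).
Proof.
rewrite inE; apply: (iffP existsP) => [[u /existsP [v /andP [uv /eqP ->]]] | [u [v [uv ->]]]].
  by exists u, v.
by exists u; apply/existsP; exists v; rewrite uv eqxx.
Qed.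

Definition core (G : graph) : {set 'I_(gn G)} := [set v | [exists u, gadj G v u]].

Lemma adj_core (G : graph) u v : gadj G u v -> u \in core G /\ v \in core G.
Proof.
by move=> uv; rewrite !inE; split; apply/existsP; [exists v | exists u; rewrite gsym].
Qed.

Lemma edges_sub_core (G : graph) A : A \in edges G -> A \subset core G.
Proof.
case/edgesP => u [v [/adj_core [uG vG] ->]].
by apply/subsetP => x /set2P [] ->.
Qed.

Definition core_embedding (G H : graph) (f : 'I_(gn G) -> 'I_(gn H)) : Prop :=
  {in core G &, injective f} /\ forall u v, gadj G u v -> gadj H (f u) (f v).
Arguments core_embedding : clear implicits.

Definition core_equiv (G H : graph) : Prop :=
  (exists f, core_embedding G H f) /\ (exists g, core_embedding H G g).

Lemma nedges_embedding (G H : graph) f : core_embedding G H f -> (nedges G <= nedges H)%N.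
Proof.
case=> injf adjf; rewrite /nedges.
rewrite -(card_in_imset (f := fun A : {set 'I_(gn G)} => f @: A)); last first.
  by move=> A B /edges_sub_core sA /edges_sub_core sB; apply: (imset_inj_in injf).
apply/subset_leq_card/subsetP => _ /imsetP [_ /edgesP [u [v [uv ->]]] ->].
by apply/edgesP; exists (f u), (f v); rewrite imsetU1 imset_set1 adjf.
Qed.

Lemma nedges_core_equiv (G H : graph) : core_equiv G H -> nedges G = nedges H.
Proof.
case=> [[f ef] [g eg]].
by apply/eqP; rewrite eqn_leq (nedges_embedding ef) (nedges_embedding eg).
Qed.

Section Pad.
Variables (F : graph) (k : nat).

Definition pad_adj (i j : 'I_(gn F + k)) : bool :=
  if (split i, split j) is (inl a, inl b) then gadj F a b else false.

Lemma pad_sym : symmetric pad_adj.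
Proof.
by move=> i j; rewrite /pad_adj; case: (split i); case: (split j) => // a b; rewrite gsym.
Qed.

Lemma pad_irr : irreflexive pad_adj.
Proof. by move=> i; rewrite /pad_adj; case: (split i) => // a; rewrite girr. Qed.

Definition pad : graph := @Graph (gn F + k) pad_adj pad_sym pad_irr.

Lemma pad_adj_lshift a b : gadj pad (lshift k a) (lshift k b) = gadj F a b.
Proof. by rewrite /= /pad_adj !(@unsplitK _ _ (inl _)). Qed.

Lemma pad_adjP (i j : 'I_(gn F + k)) : gadj pad i j ->
  exists a b, [/\ i = lshift k a, j = lshift k b & gadj F a b].
Proof.
rewrite /= /pad_adj; move: (splitK i) (splitK j).
by case: (split i) => // a; case: (split j) => // b /= <- <- ab; exists a, b.
Qed.

Lemma lshift_embedding : core_embedding F pad (lshift k).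
Proof. by split=> [u v _ _ /lshift_inj | u v]; rewrite ?pad_adj_lshift. Qed.

Lemma nedges_pad : nedges pad = nedges F.
Proof.
apply/eqP; rewrite eqn_leq (nedges_embedding lshift_embedding) andbT.
apply: leq_trans (leq_imset_card (fun A : {set 'I_(gn F)} => lshift k @: A) (edges F)).
apply/subset_leq_card/subsetP => _ /edgesP [i [j [/pad_adjP [a [b [-> -> ab]]] ->]]].
by apply/imsetP; exists [set a; b]; [apply/edgesP; exists a, b | rewrite imsetU1 imset_set1].
Qed.

Definition pad_restr (c : coloring pad) : coloring F := fun A => c (lshift k @: A).

Lemma mono_copy_lshift (c : coloring pad) col K :
  mono_copy (pad_restr c) col K -> mono_copy c col K.
Proof.
case=> g [injg copyg]; exists (fun u => lshift k (g u)); split.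
  by move=> u v /lshift_inj /injg.
move=> u v /copyg [gFuv cuv]; rewrite pad_adj_lshift; split=> //.
by rewrite -cuv /pad_restr imsetU1 imset_set1.
Qed.

End Pad.

(* Core vertices of H' follow the copy of H through f; the isolated vertices
   of H' are sent injectively to the padding. *)
Lemma mono_copy_pad (F H H' : graph) f (c : coloring (pad F (gn H'))) col :
  core_embedding H' H f -> mono_copy (pad_restr c) col H -> mono_copy c col H'.
Proof.
case=> injf adjf [g [injg copyg]].
pose psi v := if v \in core H' then lshift (gn H') (g (f v)) else rshift (gn F) v.
exists psi; split.
  move=> v w; rewrite /psi.
  case: ifP => vH; case: ifP => wH.
  - by move/lshift_inj/injg/injf; apply.
  - by move/eqP; rewrite eq_lrshift.
  - by move/eqP; rewrite eq_rlshift.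
  - exact: rshift_inj.
move=> v w vw; have [vH wH] := adj_core vw; rewrite /psi vH wH.
have [gFvw cvw] := copyg _ _ (adjf _ _ vw).
by rewrite pad_adj_lshift -cvw /pad_restr imsetU1 imset_set1.
Qed.

Lemma arrows_pad (F K H H' : graph) f :
  core_embedding H' H f -> arrows F K H -> arrows (pad F (gn H')) K H'.
Proof.
move=> ef FKH c; case: (FKH (pad_restr c)) => [red | blue].
  by left; apply: mono_copy_lshift.
by right; apply: mono_copy_pad ef blue.
Qed.

Lemma size_ramsey_ok_embedding (K H H' : graph) f m :
  core_embedding H' H f -> size_ramsey_ok K H m -> size_ramsey_ok K H' m.
Proof.
move=> ef [F [<- FKH]]; exists (pad F (gn H')).
by rewrite nedges_pad; split=> //; apply: arrows_pad ef FKH.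
Qed.

Lemma size_ramsey_core_equiv (K H H' : graph) :
  core_equiv H H' -> size_ramsey K H = size_ramsey K H'.
Proof.
case=> [[f ef] [g eg]].
have okE m : size_ramsey_ok K H m <-> size_ramsey_ok K H' m.
  by split; [apply: size_ramsey_ok_embedding eg | apply: size_ramsey_ok_embedding ef].
rewrite /size_ramsey; congr (epsilon _ _).
apply: functional_extensionality => m; apply: propositional_extensionality.
by split=> [] [okm minm]; split=> [|n /okE]; by [apply/okE | apply: minm].
Qed.

Lemma r_infty_core_equiv (H H' : graph) : core_equiv H H' -> r_infty H = r_infty H'.
Proof.
move=> HH'; rewrite /r_infty (nedges_core_equiv HH').
congr (real (Lim_seq _)); apply: functional_extensionality => t.
by rewrite (size_ramsey_core_equiv _ HH').
Qed.

Section TableGraph.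
Variables (n : nat) (r : {ffun 'I_n * 'I_n -> bool}).

Definition table_adj (i j : 'I_n) : bool := [&& i != j, r (i, j) & r (j, i)].

Lemma table_sym : symmetric table_adj.
Proof. by move=> i j; rewrite /table_adj eq_sym [r (i, j) && _]andbC. Qed.

Lemma table_irr : irreflexive table_adj.
Proof. by move=> i; rewrite /table_adj eqxx. Qed.

Definition table_graph : graph := @Graph n table_adj table_sym table_irr.

End TableGraph.

(* Row i of the table is the i-th vertex of enum (core G); the hypothesis
   0 < gn G only supplies a default vertex for nth. *)
Lemma core_equiv_table_graph (G : graph) B : (0 < gn G)%N -> (core_order G <= B)%N ->
  exists r : {ffun 'I_B.+1 * 'I_B.+1 -> bool}, core_equiv G (table_graph r).
Proof.
move=> G_gt0 coreB; pose x0 := Ordinal G_gt0.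
pose s := enum (core G); pose to_table u : 'I_B.+1 := inord (index u s).
pose of_table (i : 'I_B.+1) := nth x0 s i.
have size_s : size s = core_order G by rewrite -cardE.
have mem_s w : (w \in s) = (w \in core G) by rewrite mem_enum.
have to_tableE u : u \in core G -> (to_table u : nat) = index u s.
  move=> uG; apply: inordK; rewrite ltnS; apply: leq_trans coreB; apply: ltnW.
  by rewrite -size_s index_mem mem_s.
pose r := [ffun p : 'I_B.+1 * 'I_B.+1 =>
  [&& (p.1 < size s)%N, (p.2 < size s)%N & gadj G (of_table p.1) (of_table p.2)]].
have inj_to : {in core G &, injective to_table}.
  move=> u v uG vG /(congr1 val); rewrite /= !to_tableE //.
  by apply: (index_inj x0); rewrite mem_s.
exists r; split.
  exists to_table; split=> // u v uv; have [uG vG] := adj_core uv.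
  have to_tableK w : w \in core G -> of_table (to_table w) = w.
    by move=> wG; rewrite /of_table to_tableE // nth_index ?mem_s.
  have rE w w' : w \in core G -> w' \in core G -> r (to_table w, to_table w') = gadj G w w'.
    by move=> wG w'G; rewrite ffunE /= !to_tableE // !index_mem !mem_s wG w'G !to_tableK.
  rewrite /= /table_adj !rE // uv gsym uv !andbT.
  by apply: contraTneq uv => /(inj_to _ _ uG vG) ->; rewrite girr.
exists of_table; split=> [i j | i j].
  rewrite !inE => /existsP [i' /and3P [_ + _]] /existsP [j' /and3P [_ + _]].
  rewrite !ffunE => /andP [ilt _] /andP [jlt _] /eqP.
  by rewrite /of_table nth_uniq ?enum_uniq // => /eqP; apply: val_inj.
by rewrite /= /table_adj ffunE => /and3P [_ /and3P [_ _ ->]].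
Qed.

Lemma nonempty_graph_gn_gt0 (G : graph) : nonempty_graph G -> (0 < gn G)%N.
Proof. by case/card_gt0P => _ /edgesP [u _]; apply: leq_ltn_trans (ltn_ord u). Qed.

Theorem proposition2p8 (G : nat -> graph) :
  (forall N, (1 <= N)%N -> nonempty_graph (G N)) ->
  (exists B : nat, forall N, (1 <= N)%N -> (core_order (G N) <= B)%N) ->
  exists s : seq R, forall N, (1 <= N)%N -> List.In (r_infty (G N)) s.
Proof.
move=> nonempty [B coreB].
exists (List.map (fun r => r_infty (table_graph r))
                 (enum {ffun 'I_B.+1 * 'I_B.+1 -> bool})).
move=> N N_ge1; have GN_gt0 := nonempty_graph_gn_gt0 (nonempty N N_ge1).
have [r GNr] := core_equiv_table_graph GN_gt0 (coreB N N_ge1).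
by rewrite (r_infty_core_equiv GNr); apply/List.in_map/mem_In; rewrite mem_enum.
Qed.
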